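(* In the $\ell^1$ linear social choice setting, on every instance with $n$ voters the uniform projection rule satisfies $\mathbb{E}_{c\sim f_{\mathrm{UProj}}}[\mathrm{UW}(c)]\ge\frac nd$. Consequently $\mathrm{D}(f_{\mathrm{UProj}})=O(d)$.
   Context: Setting ($\ell^1$ linear social choice). Let $\Delta_d=\{x\in\mathbb{R}^d_{\ge 0}:\sum_i x^i=1\}$ (superscripts denote coordinates). An instance consists of $n$ voters and $m$ candidates, each a vector in $\Delta_d$, with every voter vector in $\mathrm{Cone}(C)$ (nonnegative linear combinations of the candidate vectors $C$). Utility $u_v(c)=v^\top c$; voters report consistent rankings; $\mathrm{UW}(c)=\sum_v u_v(c)$. A randomized rule outputs a distribution over $C$ and may use the candidate vectors but not the voter vectors. Distortion on an instance: $\max_c\mathrm{UW}(c)/\mathbb{E}_{c\sim f}[\mathrm{UW}(c)]$; $\mathrm{D}(f)$ is the supremum over instances, as a function of $d$. Uniform projection rule $f_{\mathrm{UProj}}$: with $\mu=(1/d,\dots,1/d)$, output a distribution $(p_c)_{c\in C}$ such that $\hat c=\sum_c p_c c$ minimizes $\mathrm{KL}(\mu\|x)=\sum_{i=1}^d\mu^i\ln(\mu^i/x^i)$ over $x\in\mathrm{CH}(C)$, the convex hull of $C$. *)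

From mathcomp Require Import all_boot all_order all_algebra.
From mathcomp Require Import reals exp.
Set Implicit Arguments. Unset Strict Implicit. Unset Printing Implicit Defensive.
Import Order.TTheory GRing.Theory Num.Theory.
Local Open Scope ring_scope.

Section L1SocialChoice.
Variable R : realType.

Definition in_simplex (d : nat) (x : 'I_d -> R) : Prop :=
  (forall i, 0 <= x i) /\ \sum_(i < d) x i = 1.

Definition is_dist (m : nat) (p : 'I_m -> R) : Prop :=
  (forall j, 0 <= p j) /\ \sum_(j < m) p j = 1.

Definition in_cone (d m : nat) (C : 'I_m -> 'I_d -> R) (v : 'I_d -> R) : Prop :=
  exists lam : 'I_m -> R, (forall j, 0 <= lam j) /\
    forall i, v i = \sum_(j < m) lam j * C j i.

Definition hull_point (d m : nat) (C : 'I_m -> 'I_d -> R) (p : 'I_m -> R)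
  : 'I_d -> R := fun i => \sum_(j < m) p j * C j i.

(* KL(mu || x) with mu uniform on [d] (for x with positive coordinates) *)
Definition KL_unif (d : nat) (x : 'I_d -> R) : R :=
  \sum_(i < d) (1 / d%:R) * ln ((1 / d%:R) / x i).

Definition positive_vec (d : nat) (x : 'I_d -> R) : Prop := forall i, 0 < x i.

(* p is an output of the uniform projection rule on candidate set C:
   chat = sum_c p_c c minimizes KL(mu || x) over x in CH(C)
   (KL is +oo at points with a zero coordinate, so the minimizer is a
   point with positive coordinates). *)
Definition uproj_output (d m : nat) (C : 'I_m -> 'I_d -> R) (p : 'I_m -> R)
  : Prop :=
  is_dist p /\ positive_vec (hull_point C p) /\
  forall q : 'I_m -> R, is_dist q -> positive_vec (hull_point C q) ->
    KL_unif (hull_point C p) <= KL_unif (hull_point C q).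

Definition valid_instance (d n m : nat) (C : 'I_m -> 'I_d -> R)
  (V : 'I_n -> 'I_d -> R) : Prop :=
  (forall j, in_simplex (C j)) /\ (forall k, in_simplex (V k)) /\
  (forall k, in_cone C (V k)).

Definition utility (d : nat) (v c : 'I_d -> R) : R := \sum_(i < d) v i * c i.

Definition UW (d n : nat) (V : 'I_n -> 'I_d -> R) (c : 'I_d -> R) : R :=
  \sum_(k < n) utility (V k) c.

Definition expected_UW (d n m : nat) (V : 'I_n -> 'I_d -> R)
  (C : 'I_m -> 'I_d -> R) (p : 'I_m -> R) : R :=
  \sum_(j < m) p j * UW V (C j).

Definition distortion (d n m : nat) (V : 'I_n -> 'I_d -> R)
  (C : 'I_m -> 'I_d -> R) (p : 'I_m -> R) : R :=
  (\big[Num.max/0]_(j < m) UW V (C j)) / expected_UW V C p.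

End L1SocialChoice.

(** The point ĉ maximises [∑_i ln x_i] over CH(C), so moving from ĉ towards
any w ∈ CH(C) cannot increase it; to first order this gives
[∑_i w_i / ĉ_i <= d].  A voter v lies in Δ_d ∩ Cone(C) ⊆ CH(C), and by
AM-GM [v·ĉ >= 1 / ∑_i v_i / ĉ_i >= 1/d].  Summing over the voters gives
E[UW] >= n/d, while every candidate has welfare at most n. *)

From mathcomp Require Import all_boot all_order all_algebra.
From mathcomp Require Import reals exp.
From mathcomp Require Import ring lra.
Import Order.TTheory GRing.Theory Num.Theory.
Set Implicit Arguments.
Unset Strict Implicit.
Local Open Scope ring_scope.

Section UniformProjection.
Variable R : realType.
Implicit Types (x y b t A S c D E M N : R).

Lemma le_ln_sub x y : 0 < x -> 0 < y -> 1 - x / y <= ln y - ln x.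
Proof.
move=> x0 y0; have xy0 : 0 < x / y by rewrite divr_gt0.
have := @le_ln1Dx R (x / y - 1); rewrite addrCA subrr addr0 ln_div ?posrE //.
move=> /(_ ltac:(lra)); lra.
Qed.

Lemma div_le_div_shift x t b : 0 < x -> 0 < t -> x <= 2 * (x + t * b) ->
  b / x <= b / (x + t * b) + t * (2 * b ^+ 2 / x ^+ 2).
Proof.
move=> x0 t0 xy; have y0 : 0 < x + t * b by lra.
set y := x + t * b.
have -> : b / x = b / y + t * (2 * b ^+ 2 / x ^+ 2)
                  + (t * b ^+ 2) * ((x - 2 * y) / (x ^+ 2 * y)).
  by rewrite /y; field; rewrite -/y; apply/andP; split; apply: lt0r_neq0.
rewrite gerDl; apply: mulr_ge0_le0; first by rewrite mulr_ge0 ?sqr_ge0 ?ltW.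
by rewrite pmulr_lle0 ?invr_gt0 ?mulr_gt0 ?exprn_gt0 // /y subr_le0.
Qed.

Lemma le0_of_le_mul_small A S c : 0 < c ->
  (forall t, 0 < t -> t <= c -> A <= t * S) -> A <= 0.
Proof.
move=> c0 small; rewrite leNgt; apply/negP => A0.
have AcS := small c c0 (lexx c).
have S0 : 0 < S by rewrite -(pmulr_rgt0 _ c0); lra.
have := small (A / (2 * S)); rewrite divr_gt0 ?mulr_gt0 // ler_pdivrMr ?mulr_gt0 //.
have -> : A / (2 * S) * S = A / 2 by field; rewrite lt0r_neq0.
move=> /(_ isT ltac:(nra)); lra.
Qed.

Lemma sum_div_le_card_of_ln_max (d : nat) (x w : 'I_d -> R) :
  (forall i, 0 < x i) -> (forall i, 0 <= w i) ->
  (forall t, 0 < t -> t <= 1/2 ->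
     \sum_(i < d) ln (x i + t * (w i - x i)) <= \sum_(i < d) ln (x i)) ->
  \sum_(i < d) w i / x i <= d%:R.
Proof.
move=> x0 w0 xmax.
suff : \sum_(i < d) (w i - x i) / x i <= 0.
  have -> : d%:R = \sum_(i < d) (1 : R) by rewrite sumr_const card_ord.
  move=> le0; rewrite -subr_le0 -sumrB.
  by under eq_bigr => i _ do rewrite -[1](divff (lt0r_neq0 (x0 i))) -mulrBl.
apply: (@le0_of_le_mul_small _ (\sum_(i < d) 2 * (w i - x i) ^+ 2 / x i ^+ 2) (1/2)).
  by rewrite divr_gt0.
move=> t t0 t_le; set y := fun i => x i + t * (w i - x i).
(* [y >= x/2] makes the error [b/x - b/y] of order [t], see div_le_div_shift. *)
have half i : x i <= 2 * y i.
  have := x0 i; have := mulr_ge0 (ltW t0) (w0 i).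
  by rewrite /y; nra.
have y0 i : 0 < y i by have := half i; have := x0 i; lra.
have secant : \sum_(i < d) (w i - x i) / y i <= 0.
  rewrite -(pmulr_rle0 _ t0) mulr_sumr.
  apply: le_trans (_ : \sum_(i < d) (ln (y i) - ln (x i)) <= 0); last first.
    by rewrite sumrB subr_le0; exact: xmax.
  apply: ler_sum => i _.
  have -> : t * ((w i - x i) / y i) = 1 - x i / y i.
    by rewrite /y; field; have := y0 i; rewrite /y => /lt0r_neq0.
  exact: le_ln_sub.
apply: le_trans (_ : \sum_(i < d) ((w i - x i) / y i
                     + t * (2 * (w i - x i) ^+ 2 / x i ^+ 2)) <= _).
  by apply: ler_sum => i _; apply: div_le_div_shift.
by rewrite big_split /= -mulr_sumr gerDr.
Qed.

Lemma inv_le_dot_of_sum_div_le (d : nat) (v x : 'I_d -> R) D : 0 < D ->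
  in_simplex v -> (forall i, 0 < x i) -> \sum_(i < d) v i / x i <= D ->
  D^-1 <= \sum_(i < d) v i * x i.
Proof.
move=> D0 [v0 v1] x0 le_D; set l := D^-1.
have l0 : 0 < l by rewrite invr_gt0.
have amgm : \sum_(i < d) 2 * l * v i
            <= \sum_(i < d) (v i * x i + l ^+ 2 * (v i / x i)).
  apply: ler_sum => i _; rewrite -subr_ge0.
  have -> : v i * x i + l ^+ 2 * (v i / x i) - 2 * l * v i
            = v i * ((x i - l) ^+ 2 / x i) by field; rewrite lt0r_neq0.
  by apply: mulr_ge0 (v0 i) _; rewrite divr_ge0 ?sqr_ge0 ?ltW.
move: amgm; rewrite big_split /= -!mulr_sumr v1.
have : l ^+ 2 * \sum_(i < d) v i / x i <= l ^+ 2 * D by rewrite ler_pM2l ?exprn_gt0.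
have -> : l ^+ 2 * D = l by rewrite /l; field; rewrite lt0r_neq0.
lra.
Qed.

Lemma simplex_dim_gt0 (d : nat) (x : 'I_d -> R) : in_simplex x -> (0 < d)%N.
Proof. by case: d x => // x [_]; rewrite big_ord0 => /eqP; rewrite eq_sym oner_eq0. Qed.

Lemma KL_unif_le (d : nat) (x y : 'I_d -> R) : (0 < d)%N ->
  positive_vec x -> positive_vec y ->
  (KL_unif x <= KL_unif y) = (\sum_(i < d) ln (y i) <= \sum_(i < d) ln (x i)).
Proof.
move=> d0 x0 y0; have dinv0 : 0 < 1 / (d%:R : R) by rewrite divr_gt0 ?ltr0n.
rewrite /KL_unif.
under eq_bigr => i _ do rewrite ln_div ?posrE // mulrBr.
under [X in _ <= X]eq_bigr => i _ do rewrite ln_div ?posrE // mulrBr.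
by rewrite !sumrB lerD2l lerN2 -!mulr_sumr ler_pM2l.
Qed.

Lemma simplex_le1 (d : nat) (x : 'I_d -> R) i : in_simplex x -> x i <= 1.
Proof.
move=> [x0 <-]; rewrite (bigD1 i) //= lerDl.
by apply: sumr_ge0 => j _; exact: x0.
Qed.

Lemma utility_le1 (d : nat) (v c : 'I_d -> R) :
  in_simplex v -> in_simplex c -> utility v c <= 1.
Proof.
move=> [v0 v1] c_simplex; rewrite -v1; apply: ler_sum => i _.
by rewrite ler_piMr ?simplex_le1.
Qed.

Lemma div_le_of_ratio_le M N E D : 0 < D -> 0 <= N -> M <= N -> N / D <= E ->
  M / E <= D.
Proof.
move=> D0 N0 MN NE; have [->|E_neq0] := eqVneq E 0; first by rewrite invr0 mulr0 ltW.
have E0 : 0 < E by rewrite lt0r E_neq0 (le_trans (divr_ge0 N0 (ltW D0)) NE).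
move: NE; rewrite ler_pdivrMr // ler_pdivrMr // mulrC => ND.
exact: le_trans ND.
Qed.

Variables (d m n : nat) (C : 'I_m -> 'I_d -> R) (V : 'I_n -> 'I_d -> R).

Definition dist_conv t (p q : 'I_m -> R) : 'I_m -> R :=
  fun j => (1 - t) * p j + t * q j.

Lemma is_dist_conv t p q : 0 <= t <= 1 ->
  is_dist p -> is_dist q -> is_dist (dist_conv t p q).
Proof.
move=> /andP[t0 t1] [p0 p1] [q0 q1]; split=> [j|].
  by rewrite addr_ge0 ?mulr_ge0 ?subr_ge0.
by rewrite big_split /= -!mulr_sumr p1 q1 !mulr1 subrK.
Qed.

Lemma hull_point_conv t p q i :
  hull_point C (dist_conv t p q) i
  = (1 - t) * hull_point C p i + t * hull_point C q i.
Proof.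
rewrite /hull_point !mulr_sumr -big_split /=.
by apply: eq_bigr => j _; rewrite /dist_conv mulrDl !mulrA.
Qed.

Lemma hull_point_ge0 q :
  (forall j, in_simplex (C j)) -> is_dist q -> forall i, 0 <= hull_point C q i.
Proof.
by move=> Cs [q0 _] i; apply: sumr_ge0 => j _; rewrite mulr_ge0 ?(Cs j).1.
Qed.

Lemma simplex_cone_in_hull v : (forall j, in_simplex (C j)) ->
  in_simplex v -> in_cone C v -> exists2 lam, is_dist lam & v =1 hull_point C lam.
Proof.
move=> Cs [_ v1] [lam [lam0 vE]]; exists lam => //; split=> //.
rewrite -v1; under [RHS]eq_bigr do rewrite vE.
rewrite exchange_big; apply: eq_bigr => j _.
by rewrite -mulr_sumr (Cs j).2 mulr1.
Qed.

Lemma uproj_sum_div_le p q : (0 < d)%N -> (forall j, in_simplex (C j)) ->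
  uproj_output C p -> is_dist q ->
  \sum_(i < d) hull_point C q i / hull_point C p i <= d%:R.
Proof.
move=> d0 Cs [p_dist [x0 p_min]] q_dist.
apply: sum_div_le_card_of_ln_max => // [i|t t0 t_le]; first exact: hull_point_ge0.
have q'_dist : is_dist (dist_conv t p q).
  by apply: is_dist_conv => //; apply/andP; split; lra.
have yE i : hull_point C (dist_conv t p q) i
            = hull_point C p i + t * (hull_point C q i - hull_point C p i).
  by rewrite hull_point_conv; ring.
have y0 : positive_vec (hull_point C (dist_conv t p q)).
  move=> i; rewrite hull_point_conv.
  have := x0 i; have := mulr_ge0 (ltW t0) (hull_point_ge0 Cs q_dist i).
  nra.
have := p_min _ q'_dist y0; rewrite KL_unif_le //.
by under eq_bigr do rewrite yE.
Qed.

Lemma uproj_utility_ge p v : (forall j, in_simplex (C j)) ->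
  uproj_output C p -> in_simplex v -> in_cone C v ->
  d%:R^-1 <= utility v (hull_point C p).
Proof.
move=> Cs p_uproj v_simplex v_cone.
have [lam lam_dist vE] := simplex_cone_in_hull Cs v_simplex v_cone.
apply: inv_le_dot_of_sum_div_le => //.
- by rewrite ltr0n (simplex_dim_gt0 v_simplex).
- exact: p_uproj.2.1.
- under eq_bigr do rewrite vE.
  exact: uproj_sum_div_le (simplex_dim_gt0 v_simplex) Cs p_uproj lam_dist.
Qed.

Lemma uproj_dim_gt0 (p : 'I_m -> R) :
  (forall j, in_simplex (C j)) -> is_dist p -> (0 < d)%N.
Proof.
case: m C p => [|m'] C' p Cs [_ p1]; last exact: simplex_dim_gt0 (Cs ord0).
by move: p1; rewrite big_ord0 => /eqP; rewrite eq_sym oner_eq0.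
Qed.

Lemma expected_UW_hull p :
  expected_UW V C p = \sum_(k < n) utility (V k) (hull_point C p).
Proof.
rewrite /expected_UW /UW /utility.
under eq_bigr do rewrite mulr_sumr.
rewrite exchange_big; apply: eq_bigr => k _.
under eq_bigr do rewrite mulr_sumr.
rewrite exchange_big; apply: eq_bigr => i _.
by rewrite /hull_point mulr_sumr; apply: eq_bigr => j _; rewrite mulrCA.
Qed.

Lemma UW_le_card (c : 'I_d -> R) : (forall k, in_simplex (V k)) -> in_simplex c ->
  UW V c <= n%:R.
Proof.
move=> Vs c_simplex; rewrite -[n in n%:R]card_ord -sumr_const.
by apply: ler_sum => k _; exact: utility_le1.
Qed.

Lemma uproj_expected_UW_ge p : valid_instance C V -> uproj_output C p ->
  n%:R / d%:R <= expected_UW V C p.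
Proof.
move=> [Cs [Vs Vcone]] p_uproj.
have -> : n%:R / d%:R = \sum_(k < n) d%:R^-1 :> R.
  by rewrite sumr_const card_ord mulr_natl.
by rewrite expected_UW_hull; apply: ler_sum => k _; exact: uproj_utility_ge.
Qed.

Lemma uproj_distortion_le p : valid_instance C V -> uproj_output C p ->
  distortion V C p <= d%:R.
Proof.
move=> instance p_uproj; have [Cs [Vs _]] := instance.
apply: div_le_of_ratio_le (uproj_expected_UW_ge instance p_uproj) => //.
- by rewrite ltr0n (uproj_dim_gt0 Cs p_uproj.1).
- by apply: bigmax_le => // j _; exact: UW_le_card.
Qed.

End UniformProjection.

Theorem theorem5 (R : realType) :
  (forall (d n m : nat) (C : 'I_m -> 'I_d -> R) (V : 'I_n -> 'I_d -> R)
          (p : 'I_m -> R),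
     valid_instance C V -> uproj_output C p ->
     n%:R / d%:R <= expected_UW V C p)
  /\
  (exists K : R, 0 < K /\
     forall (d n m : nat) (C : 'I_m -> 'I_d -> R) (V : 'I_n -> 'I_d -> R)
            (p : 'I_m -> R),
       valid_instance C V -> uproj_output C p ->
       distortion V C p <= K * d%:R).
Proof.
split=> [d n m C V p|]; first exact: uproj_expected_UW_ge.
exists 1; split=> [|d n m C V p instance p_uproj]; first exact: ltr01.
by rewrite mul1r; exact: uproj_distortion_le.
Qed.
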